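(* Let $n\ge 1$ and let $\mathbf{u}=[u(1),\dots,u(n)]$ and $\mathbf{v}=[v(1),\dots,v(n)]$ be permutations in $S_n$ (one-line notation), with inverse functions $u^{-1},v^{-1}$. Define virtual levels $\ell_1,\dots,\ell_n$ by the following procedure: first, for $i=1,\dots,n$ set $\ell_{u(i)}\leftarrow n+1-i$; then, for $i=n-1,n-2,\dots,1$ (in this order) set $\ell_{v(i)}\leftarrow \max\{\ell_{v(i+1)}+1,\ \ell_{v(i)}\}$. Define the rewriting cost $C(\mathbf{u}\to\mathbf{v})=\ell_{v(1)}-n$, where $\ell_{v(1)}$ is the value at the end of the procedure. Then $$C(\mathbf{u}\to \mathbf{v})=\max_{i\in \{1,\dots,n\}}\bigl(v^{-1}(i)-u^{-1}(i)\bigr).$$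
   Context: A state of $n$ cells is a permutation $\mathbf{u}=[u(1),\dots,u(n)]\in S_n$, meaning cell $u(1)$ has the highest charge level and $u(n)$ the lowest; cell $u(i)$ has rank $i$, so $u^{-1}(j)$ is the rank (position) of cell $j$. The procedure in the claim models changing the state from $\mathbf{u}$ to $\mathbf{v}$ by ''minimal-push-up'' operations. *)

From mathcomp Require Import all_boot all_order all_algebra all_fingroup.
Set Implicit Arguments. Unset Strict Implicit. Unset Printing Implicit Defensive.
Import Order.TTheory GRing.Theory Num.Theory.
Local Open Scope ring_scope.

(* Conventions: cells and ranks are 0-indexed ('I_n), i.e. cell c / rank p here
   correspond to cell c+1 / rank p+1 in the paper. *)

Definition one_line (n : nat) (u : {perm 'I_n}) : seq nat :=
  [seq (val (u i) : nat) | i <- enum 'I_n].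

(* first phase: l_{u(i)} <- n+1-i, i.e. l_c = n - (0-indexed position of c in u) *)
Definition init_levels (n : nat) (us : seq nat) : nat -> int :=
  fun c => (n%:Z - (index c us)%:Z).

Definition level_step (vs : seq nat) (l : nat -> int) (p : nat) : nat -> int :=
  let c := nth 0%N vs p in
  fun x => if x == c then Num.max (l (nth 0%N vs p.+1) + 1) (l c) else l x.

(* second phase: positions i = n-1, n-2, ..., 1 (1-indexed), i.e. p = n-2, ..., 0 *)
Definition final_levels (n : nat) (u v : {perm 'I_n}) : nat -> int :=
  foldl (level_step (one_line v)) (init_levels n (one_line u)) (rev (iota 0 n.-1)).

Definition rewrite_cost (n : nat) (u v : {perm 'I_n}) : int :=
  final_levels u v (nth 0%N (one_line v) 0) - n%:Z.

Definition maxz_seq (s : seq int) : int := foldr Num.max (head 0 s) s.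

(* The second phase sweeps positions n-1, ..., 1 upwards, and by downward
   induction on p, once positions >= p are processed the cell v(p) has level
   max_{r >= p} (l0(v(r)) + r - p), with l0 the initial levels, while cells at
   positions < p are untouched.  At p = 1 this is
   max_r (n + 1 - u^{-1}(v(r)) + r - 1); subtracting n and reindexing by the cell
   i = v(r) gives max_i (v^{-1}(i) - u^{-1}(i)). *)
From mathcomp Require Import all_boot all_order all_algebra all_fingroup.
From mathcomp Require Import zify.
Set Implicit Arguments. Unset Strict Implicit. Unset Printing Implicit Defensive.
Import Order.TTheory GRing.Theory Num.Theory.
Local Open Scope ring_scope.

Section Sweep.
Variables (vs : seq nat) (l0 : nat -> int).
Hypothesis vs_uniq : uniq vs.

(* levels after processing the positions (size vs).-2, ..., j (0-indexed) *)
Definition sweep (j : nat) : nat -> int :=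
  foldr (fun p l => level_step vs l p) l0 (iota j ((size vs).-1 - j)).

Lemma sweep_last : sweep (size vs).-1 = l0.
Proof. by rewrite /sweep subnn. Qed.

Lemma sweepS j : (j < (size vs).-1)%N -> sweep j = level_step vs (sweep j.+1) j.
Proof.
move=> lt_j; rewrite /sweep (_ : _ - j = ((size vs).-1 - j.+1).+1)%N //; lia.
Qed.

Lemma sweep_frame j : (j < size vs)%N -> sweep j.+1 (nth 0%N vs j) = l0 (nth 0%N vs j).
Proof.
move=> lt_j; rewrite /sweep.
have : all (fun p => j < p < size vs)%N (iota j.+1 ((size vs).-1 - j.+1)).
  by apply/allP => p; rewrite mem_iota => /andP[? ?]; apply/andP; split; lia.
elim: (iota _ _) => //= p ps IHps /andP[/andP[lt_jp lt_p] /IHps {}IHps].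
by rewrite /level_step nth_uniq // (ltn_eqF lt_jp).
Qed.

Lemma sweep_level_rec j : (j < (size vs).-1)%N ->
  sweep j (nth 0%N vs j) = Num.max (sweep j.+1 (nth 0%N vs j.+1) + 1) (l0 (nth 0%N vs j)).
Proof. by move=> lt_j; rewrite sweepS // /level_step eqxx sweep_frame //; lia. Qed.

Lemma sweep_level_ge j r : (j <= r < size vs)%N ->
  l0 (nth 0%N vs r) + (r - j)%:Z <= sweep j (nth 0%N vs j).
Proof.
move=> /andP[le_jr lt_r]; have [d def_d] : exists d, (r - j)%N = d by eexists.
elim: d j def_d le_jr => [|d IHd] j def_d le_jr.
  have -> : r = j by lia.
  rewrite subnn addr0; have [lt_j|ge_j] := ltnP j (size vs).-1.
    by rewrite sweep_level_rec // le_max lexx orbT.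
  have -> : j = (size vs).-1 by lia.
  by rewrite sweep_last.
rewrite sweep_level_rec; last by lia.
rewrite le_max; apply/orP; left.
have -> : (r - j)%N = (r - j.+1).+1 by lia.
by rewrite -[(r - j.+1).+1]addn1 PoszD addrA lerD2r IHd //; lia.
Qed.

Lemma sweep_level_attained j : (j < size vs)%N ->
  exists2 r, (j <= r < size vs)%N & sweep j (nth 0%N vs j) = l0 (nth 0%N vs r) + (r - j)%:Z.
Proof.
have [k def_k] : exists k, ((size vs).-1 - j)%N = k by eexists.
elim: k j def_k => [|k IHk] j def_k lt_j.
  have -> : j = (size vs).-1 by lia.
  by exists (size vs).-1; rewrite ?sweep_last ?subnn ?addr0 ?leqnn //; lia.
rewrite sweep_level_rec; last by lia.
have [le_next|lt_next] := leP (sweep j.+1 (nth 0%N vs j.+1) + 1) (l0 (nth 0%N vs j)).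
  by exists j; rewrite ?subnn ?addr0 ?leqnn.
have [r /andP[le_jr lt_r] ->] := IHk j.+1 ltac:(lia) ltac:(lia).
exists r; first by apply/andP; split; lia.
have -> : (r - j)%N = (r - j.+1).+1 by lia.
by rewrite -[(r - j.+1).+1]addn1 PoszD addrA.
Qed.

End Sweep.

Lemma foldr_max_ge (s : seq int) d y : y \in d :: s -> y <= foldr Num.max d s.
Proof.
elim: s => [|a s IHs]; first by rewrite inE => /eqP ->.
rewrite /= le_max !inE => /or3P[y_d|/eqP->|y_s].
- by rewrite IHs ?orbT // inE y_d.
- by rewrite lexx.
- by rewrite IHs ?orbT // inE y_s orbT.
Qed.

Lemma foldr_max_in (s : seq int) d : foldr Num.max d s \in d :: s.
Proof.
elim: s => [|a s IHs] /=; first by rewrite inE.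
case: leP => _; last by rewrite !inE eqxx orbT.
by move: IHs; rewrite !inE => /orP[->|->]; rewrite ?orbT.
Qed.

Lemma maxz_seqP (s : seq int) x :
  x \in s -> {in s, forall y, y <= x} -> maxz_seq s = x.
Proof.
case: s => // a s x_s le_x.
have max_in : maxz_seq (a :: s) \in a :: s.
  have := foldr_max_in (a :: s) a; rewrite /maxz_seq /= inE.
  by case/orP=> [/eqP->|]; rewrite ?mem_head.
by apply/le_anti; rewrite le_x // foldr_max_ge // inE x_s orbT.
Qed.

Lemma one_line_size n (u : {perm 'I_n}) : size (one_line u) = n.
Proof. by rewrite size_map size_enum_ord. Qed.

Lemma one_line_nth n (u : {perm 'I_n}) (i : 'I_n) : nth 0%N (one_line u) i = val (u i).
Proof. by rewrite (nth_map i) ?size_enum_ord // nth_ord_enum. Qed.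

Lemma one_line_uniq n (u : {perm 'I_n}) : uniq (one_line u).
Proof. by rewrite map_inj_uniq ?enum_uniq // => x y /val_inj /perm_inj. Qed.

Lemma one_line_index n (u : {perm 'I_n}) (c : 'I_n) :
  index (val c) (one_line u) = val ((u^-1)%g c).
Proof.
have := one_line_nth u ((u^-1)%g c); rewrite permKV => <-.
by rewrite index_uniq ?one_line_size ?one_line_uniq.
Qed.

Lemma init_levels_one_line n (u : {perm 'I_n}) (c : 'I_n) :
  init_levels n (one_line u) (val c) = n%:Z - (val ((u^-1)%g c))%:Z.
Proof. by rewrite /init_levels one_line_index. Qed.

Lemma final_levels_sweep n (u v : {perm 'I_n}) :
  final_levels u v = sweep (one_line v) (init_levels n (one_line u)) 0.
Proof. by rewrite /final_levels foldl_rev /sweep subn0 one_line_size. Qed.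

Theorem theorem1 (n : nat) (hn : (1 <= n)%N) (u v : {perm 'I_n}) :
  rewrite_cost u v =
  maxz_seq [seq ((val ((v^-1)%g i))%:Z - (val ((u^-1)%g i))%:Z) | i <- enum 'I_n].
Proof.
have v_uniq := one_line_uniq v; have v_size := one_line_size v.
set l0 := init_levels n (one_line u).
rewrite /rewrite_cost final_levels_sweep; apply/esym/maxz_seqP.
- have [r /andP[_ lt_r] ->] := sweep_level_attained l0 v_uniq (j := 0) ltac:(by rewrite v_size).
  rewrite v_size in lt_r; rewrite subn0 -[r]/(val (Ordinal lt_r)) one_line_nth.
  apply/mapP; exists (v (Ordinal lt_r)); first by rewrite mem_enum.
  by rewrite /l0 init_levels_one_line permK /=; lia.
- move=> _ /mapP[i _ ->].
  have := sweep_level_ge l0 v_uniq (j := 0) (r := val ((v^-1)%g i)) ltac:(by rewrite v_size ltn_ord).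
  by rewrite one_line_nth permKV /l0 init_levels_one_line subn0 lerBrDr; lia.
Qed.
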